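(* Let $X_1$ be a random variable with $\mathbb EX_1=0$, $\operatorname{Var}X_1=1$, such that $\varphi(t)=\log\mathbb Ee^{tX_1}<\infty$ for all $t\geq-\sigma_0$ for some $\sigma_0>0$, and let $I(s)=\sup_{t\geq0}(st-\varphi(t))$, $s\geq0$. Then: (i) the condition ''for every $\varepsilon>0$, $\sup_{t\geq\varepsilon}\frac{\varphi(t)}{t^2/2}<1$'' is equivalent to the condition ''for every $\varepsilon>0$, $\inf_{s\geq\varepsilon}\frac{I(s)}{s^2/2}>1$''; (ii) for $q\in\{3,4,\ldots\}$ and $\kappa>0$, the condition $\varphi(t)=\frac{t^2}2-\kappa t^q+o(t^q)$ as $t\downarrow0$ is equivalent to the condition $I(s)=\frac{s^2}2+\kappa s^q+o(s^q)$ as $s\downarrow0$. *)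

From HB Require Import structures.
From mathcomp Require Import all_boot all_order all_algebra.
From mathcomp Require Import all_classical all_reals all_analysis.
Set Implicit Arguments. Unset Strict Implicit. Unset Printing Implicit Defensive.
Import Order.TTheory GRing.Theory Num.Theory.
Import numFieldNormedType.Exports.
Local Open Scope classical_set_scope.
Local Open Scope ring_scope.

(* cumulant generating function  phi(t) = log E[e^{tX}]  (meaningful where
   the moment generating function 'M_P X t is finite) *)
Definition cgf d (T : measurableType d) (R : realType) (P : probability T R)
  (X : T -> R) (t : R) : R := ln (fine ('M_P X t)).

Definition rate d (T : measurableType d) (R : realType) (P : probability T R)
  (X : T -> R) (s : R) : \bar R :=
  ereal_sup [set ((s * t - cgf P X t)%:E) | t in `[0, +oo[%classic].

From HB Require Import structures.
From mathcomp Require Import all_boot all_order all_algebra.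
From mathcomp Require Import all_classical all_reals all_analysis.
From mathcomp Require Import measurable_realfun ring lra.
Set Implicit Arguments. Unset Strict Implicit. Unset Printing Implicit Defensive.
Import Order.TTheory GRing.Theory Num.Theory.
Import numFieldNormedType.Exports.
Local Open Scope classical_set_scope.
Local Open Scope ring_scope.

(* Both equivalences are facts about the transform
   [I(s) = sup_{t >= 0} (s t - phi t)] of a function [phi] that is convex on
   [0, +oo[ and vanishes at 0.  Bounds on [phi] give bounds
   on [I] through [I(s) >= s t - phi t].  Conversely, if [s] is a subgradient
   of [phi] at [t], the supremum defining [I(s)] is attained at [t], so
   [phi t = s t - I(s)].  In (ii), [s t - t^2/2 = s^2/2 - (t - s)^2/2]: the
   term [(t - s)^2/2] absorbs the difference between [kappa t^q] and
   [kappa s^q] unless [t / s] is close to 1, and for small [s] only small [t]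
   matter because [phi t / t] is nondecreasing. *)

Section powers.
Variable R : realType.
Implicit Types c y : R.

Lemma bernoulli_le (n : nat) c : c <= 1 -> 1 - n%:R * c <= (1 - c) ^+ n.
Proof.
move=> c1; elim: n => [|n IHn]; first by rewrite mul0r subr0 expr0.
rewrite exprSr -natr1 mulrDl mul1r.
have : (1 - n%:R * c) * (1 - c) <= (1 - c) ^+ n * (1 - c) by apply: ler_wpM2r; lra.
have : 0 <= n%:R * (c * c) by rewrite mulr_ge0 ?ler0n // -expr2 sqr_ge0.
nra.
Qed.

Lemma expr_le_sqr_near0 (q : nat) c : (2 < q)%N -> 0 < c ->
  exists2 rho : R, 0 < rho & forall y, 0 <= y < rho -> y ^+ q <= c * y ^+ 2.
Proof.
move=> q2 c0; exists (Num.min 1 c); first by rewrite lt_min ltr01.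
move=> y /andP[y0]; rewrite lt_min => /andP[y1 yc].
have -> : q = (2 + (q - 3).+1)%N by rewrite add2n -addn3 subnK.
rewrite exprD [c * _]mulrC; apply: ler_wpM2l; first exact: sqr_ge0.
rewrite exprS.
have /(ler_wpM2l y0) : y ^+ (q - 3) <= 1 by apply: exprn_ile1; lra.
lra.
Qed.

(* For [x] close to [y] the power [y ^+ q] is almost [x ^+ q]; otherwise
   [(y - x) ^+ 2] is of order [y ^+ 2], which dominates [y ^+ q]. *)
Lemma expr_le_sqr_gap (q : nat) (K e : R) : (2 < q)%N -> 0 < K -> 0 < e ->
  exists2 rho : R, 0 < rho & forall x y, 0 < x < rho -> 0 <= y < rho ->
    K * y ^+ q - (y - x) ^+ 2 / 2 <= (K + e) * x ^+ q.
Proof.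
move=> q2 K0 e0.
have q0 : 0 < q%:R :> R by rewrite ltr0n (ltn_trans _ q2).
pose c := e / (q%:R * (K + e)).
have c0 : 0 < c by rewrite divr_gt0 ?mulr_gt0 //; lra.
have qc : q%:R * c = e / (K + e).
  by rewrite /c; field; rewrite gt_eqF ?gt_eqF //; lra.
have c1 : c <= 1.
  have : e / (K + e) <= 1 by rewrite ler_pdivrMr; lra.
  have : 1 <= q%:R :> R by rewrite ler1n (ltn_trans _ q2).
  nra.
have Kc : K <= (K + e) * (1 - c) ^+ q.
  have {1}-> : K = (K + e) * (1 - q%:R * c) by rewrite qc; field; rewrite gt_eqF //; lra.
  by apply: ler_wpM2l; [lra | exact: bernoulli_le].
have cK : 0 < c ^+ 2 / (2 * K) by apply: divr_gt0; [exact: exprn_gt0 | apply: mulr_gt0; lra].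
have [rho rho0 small] := expr_le_sqr_near0 q2 cK.
exists rho => // x y /andP[x0 xr] /andP[y0 yr].
have xq0 : 0 <= x ^+ q by apply: exprn_ge0; lra.
have [far|near] := ltP x ((1 - c) * y).
- rewrite mulrBl mul1r in far.
  have cy : 0 <= c * y by exact: mulr_ge0 (ltW c0) y0.
  have : K * y ^+ q <= (y - x) ^+ 2 / 2.
    have /(ler_wpM2l (ltW K0)) := small y (introT andP (conj y0 yr)).
    have -> : K * (c ^+ 2 / (2 * K) * y ^+ 2) = (c * y) ^+ 2 / 2.
      by field; rewrite gt_eqF.
    have : (c * y) ^+ 2 <= (y - x) ^+ 2.
      by apply: lerXn2r; rewrite ?nnegrE; lra.
    lra.
  have : 0 <= (K + e) * x ^+ q by apply: mulr_ge0; lra.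
  have : 0 <= (y - x) ^+ 2 / 2 by rewrite divr_ge0 ?sqr_ge0.
  lra.
- have : ((1 - c) * y) ^+ q <= x ^+ q by apply: lerXn2r; rewrite ?nnegrE ?mulr_ge0 //; lra.
  rewrite exprMn => xy_q.
  have yq0 : 0 <= y ^+ q by exact: exprn_ge0.
  have : K * y ^+ q <= (K + e) * x ^+ q.
    apply: le_trans (ler_wpM2r yq0 Kc) _; rewrite -mulrA; apply: ler_wpM2l => //; lra.
  have : 0 <= (y - x) ^+ 2 / 2 by rewrite divr_ge0 ?sqr_ge0.
  lra.
Qed.

End powers.

Section ereal_bounds.
Variable R : realType.
Implicit Types (S : set (\bar R)) (b : R).

Lemma ereal_sup_ltr S b : (ereal_sup S < b%:E)%E ->
  exists2 a : R, a < b & forall x, S x -> (x <= a%:E)%E.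
Proof.
have ub := @ereal_sup_ubound _ S.
case: (ereal_sup S) ub => [r| |] ub; rewrite ?lte_fin // => rb.
  by exists ((r + b) / 2) => [|x /ub]; [lra | move/le_trans; apply; rewrite lee_fin; lra].
by exists (b - 1) => [|x /ub]; [lra | rewrite leeNy_eq => /eqP ->; rewrite leNye].
Qed.

Lemma ereal_inf_gtr S b : (b%:E < ereal_inf S)%E ->
  exists2 c : R, b < c & forall x, S x -> (c%:E <= x)%E.
Proof.
have lb := @ereal_inf_lbound _ S.
case: (ereal_inf S) lb => [r| |] lb; rewrite ?lte_fin // => br.
  by exists ((r + b) / 2) => [|x /lb]; [lra | apply: le_trans; rewrite lee_fin; lra].
by exists (b + 1) => [|x /lb]; [lra | rewrite leye_eq => /eqP ->; rewrite leey].
Qed.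

Lemma lee_abse_subEFin (x : \bar R) (v w : R) :
  (`|x - v%:E| <= w%:E)%E <-> ((v - w)%:E <= x /\ x <= (v + w)%:E)%E.
Proof.
case: x => [r| |] /=; last 2 first.
- by split=> // -[_]; rewrite leye_eq.
- by split=> // -[]; rewrite leeNy_eq.
rewrite !lee_fin ler_norml; split=> [/andP[]|[]] *; [split | apply/andP; split]; lra.
Qed.

End ereal_bounds.

Section legendre.
Variables (R : realType) (f : R -> R).
Implicit Types a b c eps s sigma t u v : R.

Definition legendre (s : R) : \bar R :=
  ereal_sup [set ((s * t - f t)%:E) | t in `[0, +oo[%classic].

Lemma legendre_ge s t : 0 <= t -> ((s * t - f t)%:E <= legendre s)%E.
Proof. by move=> t0; apply: ereal_sup_ubound; exists t; rewrite //= in_itv /= t0. Qed.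

Lemma legendre_le s (x : \bar R) :
  (forall t, 0 <= t -> ((s * t - f t)%:E <= x)%E) -> (legendre s <= x)%E.
Proof.
by move=> bound; apply: ge_ereal_sup => _ [t /= + <-]; rewrite in_itv /= andbT; exact: bound.
Qed.

Lemma le_legendre s' s : s' <= s -> (legendre s' <= legendre s)%E.
Proof.
move=> ss; apply: legendre_le => t t0; apply: le_trans (legendre_ge s t0).
by rewrite lee_fin lerD2r ler_wpM2r.
Qed.

Hypothesis f0 : f 0 = 0.
Hypothesis f_convex : forall a b l : R, 0 <= a -> 0 <= b -> 0 <= l <= 1 ->
  f (l * a + (1 - l) * b) <= l * f a + (1 - l) * f b.

Lemma legendre_ge0 s : (0 <= legendre s)%E.
Proof. by apply: le_trans (legendre_ge s (lexx 0)); rewrite mulr0 f0 subrr. Qed.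

Lemma convex_slope u t v : 0 <= u -> u < t -> t < v ->
  (f t - f u) * (v - t) <= (f v - f t) * (t - u).
Proof.
move=> u0 ut tv.
have vu : 0 < v - u by lra.
pose l := (v - t) / (v - u).
have l01 : 0 <= l <= 1 by rewrite divr_ge0 ?ler_pdivrMr //=; lra.
have v0 : 0 <= v by lra.
have := f_convex u0 v0 l01.
have -> : l * u + (1 - l) * v = t by rewrite /l; field; rewrite gt_eqF.
have -> : 1 - l = (t - u) / (v - u) by rewrite /l; field; rewrite gt_eqF.
move=> /(ler_wpM2r (ltW vu)).
have -> : (l * f u + (t - u) / (v - u) * f v) * (v - u) = (v - t) * f u + (t - u) * f v.
  by rewrite /l; field; rewrite gt_eqF.
nra.
Qed.

Lemma convex_ratio a b : 0 < a -> a <= b -> f a * b <= f b * a.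
Proof.
move=> a0; rewrite le_eqVlt => /predU1P[<-|ab]; first by rewrite mulrC.
by have := convex_slope (lexx 0) a0 ab; rewrite f0 !subr0; nra.
Qed.

Lemma convex_subgradient t : 0 < t ->
  exists s, forall u, 0 <= u -> f t + s * (u - t) <= f u.
Proof.
move=> t0.
pose S := [set (f t - f w) / (t - w) | w in [set w | 0 <= w < t]].
have S_le_slope w u : 0 <= w < t -> t < u ->
    (f t - f w) / (t - w) <= (f u - f t) / (u - t).
  move=> /andP[w0 wt] tu.
  rewrite ler_pdivrMr ?subr_gt0 // mulrAC ler_pdivlMr ?subr_gt0 //.
  exact: convex_slope.
have supS : has_sup S.
  split; first by exists ((f t - f 0) / (t - 0)), 0; rewrite //= lexx.
  exists ((f (t + 1) - f t) / (t + 1 - t)) => _ [w /= wt <-].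
  by apply: S_le_slope => //; lra.
exists (sup S) => u u0.
have [ut|tu|<-] := ltgtP u t; last by rewrite subrr mulr0 addr0.
- have : (f t - f u) / (t - u) <= sup S.
    by apply: sup_upper_bound => //; exists u; rewrite //= u0 ut.
  rewrite ler_pdivrMr ?subr_gt0 //; nra.
- have : sup S <= (f u - f t) / (u - t).
    by apply: ge_sup; [case: supS | move=> _ [w /= wt <-]; exact: S_le_slope].
  rewrite ler_pdivlMr ?subr_gt0 //; nra.
Qed.

Lemma legendre_subgradient s t : 0 <= t ->
  (forall u, 0 <= u -> f t + s * (u - t) <= f u) ->
  legendre s = (s * t - f t)%:E.
Proof.
move=> t0 st; apply/eqP; rewrite eq_le legendre_ge // andbT.
by apply: legendre_le => u /st; rewrite lee_fin; lra.
Qed.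

(* As [f t / t] is nondecreasing, [s * t - f t] is nonincreasing beyond [t1]. *)
Lemma legendre_le_local s t1 (x : R) : 0 < t1 -> s * t1 <= f t1 ->
  (forall t, 0 <= t <= t1 -> s * t - f t <= x) -> (legendre s <= x%:E)%E.
Proof.
move=> t10 st1 small; apply: legendre_le => t t0; rewrite lee_fin.
have [tt1|t1t] := leP t t1; first by apply: small; rewrite t0.
have := convex_ratio t10 (ltW t1t); have := small t1; rewrite (ltW t10) lexx.
move=> /(_ isT) small1 ratio.
have : (t - t1) * (s * t1 - f t1) <= 0 by rewrite mulr_ge0_le0 //; lra.
nra.
Qed.

(* A subgradient [s] at [t <= 1/2] is at most [2 * `|f 1|], so
   [legendre s = s * t - f t] is [O(t)]; as [legendre] is monotone and
   [legendre sigma >= m > 0], small [t] forces [s < sigma]. *)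
Lemma subgradient_lt sigma (m : R) : 0 < m -> (m%:E <= legendre sigma)%E ->
  exists2 tau : R, 0 < tau & forall t s, 0 < t < tau -> 0 <= f t ->
    (forall u, 0 <= u -> f t + s * (u - t) <= f u) -> s < sigma.
Proof.
move=> m0 msigma; pose C := 2 * `|f 1| + 1.
have C0 : 0 < C by rewrite /C; have := normr_ge0 (f 1); lra.
exists (Num.min (1 / 2) (m / C)).
  by rewrite lt_min; apply/andP; split; [lra | exact: divr_gt0].
move=> t s /andP[t0]; rewrite lt_min => /andP[th tmC] ft0 st.
have sC : s < C.
  have [s0|s0] := leP s 0; first by lra.
  have := st 1 ler01; have := ler_norm (f 1).
  have : 0 <= s * (1 / 2 - t) by rewrite mulr_ge0 //; lra.
  rewrite /C; lra.
rewrite ltNge; apply/negP => /le_legendre; rewrite (legendre_subgradient (ltW t0) st).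
move=> /(le_trans msigma); rewrite lee_fin.
have : t * C < m by rewrite -ltr_pdivlMr.
nra.
Qed.

Lemma legendre_super_quadratic eps a : 0 < eps ->
  (forall t, eps <= t -> f t <= a * (t ^+ 2 / 2)) ->
  forall s, eps <= s -> (((2 - a) * (s ^+ 2 / 2))%:E <= legendre s)%E.
Proof.
move=> eps0 fa s es; apply: le_trans (legendre_ge s (_ : 0 <= s)); last lra.
by rewrite lee_fin -expr2; have := fa s es; lra.
Qed.

(* Write [f t = s * t - legendre s] for a subgradient [s] at [t]: either [s]
   is small, or [legendre s >= c * s ^+ 2 / 2] and [s * t - c * s ^+ 2 / 2]
   is at most [t ^+ 2 / (2 * c)]. *)
Lemma sub_quadratic_of_legendre eps c : 0 < eps -> 1 < c ->
  (forall s, eps / 4 <= s -> ((c * (s ^+ 2 / 2))%:E <= legendre s)%E) ->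
  forall t, eps <= t -> f t <= Num.max (1 / 2) c^-1 * (t ^+ 2 / 2).
Proof.
move=> eps0 c1 Ic t et; have t0 : 0 < t by lra.
have [s st] := convex_subgradient t0.
have Is := legendre_subgradient (ltW t0) st.
have := legendre_ge0 s; rewrite Is lee_fin => fst.
have [se|es] := ltP s (eps / 4).
  apply: le_trans (_ : 1 / 2 * (t ^+ 2 / 2) <= _); last first.
    by apply: ler_wpM2r; rewrite ?le_max ?lexx // divr_ge0 ?sqr_ge0.
  have : s * t <= t / 4 * t by apply: ler_wpM2r; lra.
  rewrite expr2; lra.
apply: le_trans (_ : c^-1 * (t ^+ 2 / 2) <= _); last first.
  by apply: ler_wpM2r; rewrite ?le_max ?lexx ?orbT // divr_ge0 ?sqr_ge0.
have := Ic s es; rewrite Is lee_fin => cs.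
have c0 : 0 < c by lra.
rewrite -(ler_pM2l c0) mulrA mulfV ?gt_eqF // mul1r.
have := sqr_ge0 (t - c * s); rewrite !expr2 in cs *; nra.
Qed.

Lemma sub_quadratic_iff_legendre_super_quadratic :
  (forall eps : R, 0 < eps ->
    (ereal_sup [set (f t / (t ^+ 2 / 2))%:E | t in `[eps, +oo[%classic] < 1)%E)
  <->
  (forall eps : R, 0 < eps ->
    (1 < ereal_inf [set (legendre s * (s ^+ 2 / 2)^-1%:E)%E
                    | s in `[eps, +oo[%classic])%E).
Proof.
have sqr_gt0 (t : R) : 0 < t -> 0 < t ^+ 2 / 2.
  by move=> t0; rewrite divr_gt0 ?exprn_gt0.
split=> hyp eps eps0.
- have [a a1 fa] := ereal_sup_ltr (hyp eps eps0).
  have Ia : forall s, eps <= s -> (((2 - a) * (s ^+ 2 / 2))%:E <= legendre s)%E.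
    apply: legendre_super_quadratic => // t et.
    have : ((f t / (t ^+ 2 / 2))%:E <= a%:E)%E by apply: fa; exists t; rewrite //= in_itv /= et.
    by rewrite lee_fin ler_pdivrMr // sqr_gt0 //; lra.
  apply: (@lt_le_trans _ _ (2 - a)%:E); first by rewrite lte_fin; lra.
  apply: le_ereal_inf_tmp => _ [s /= + <-]; rewrite in_itv /= andbT => es.
  by rewrite lee_pdivlMr ?sqr_gt0 -?EFinM ?Ia //; lra.
- have eps4 : 0 < eps / 4 by lra.
  have [c c1 Ic] := ereal_inf_gtr (hyp _ eps4).
  have Ic_sq : forall s, eps / 4 <= s -> ((c * (s ^+ 2 / 2))%:E <= legendre s)%E.
    move=> s es; have s0 : 0 < s by lra.
    rewrite EFinM -lee_pdivlMr ?sqr_gt0 //.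
    by apply: Ic; exists s; rewrite //= in_itv /= es.
  have bound := sub_quadratic_of_legendre eps0 c1 Ic_sq.
  apply: (@le_lt_trans _ _ (Num.max (1 / 2) c^-1)%:E).
    apply: ge_ereal_sup => _ [t /= + <-]; rewrite in_itv /= andbT => et.
    by rewrite lee_fin ler_pdivrMr ?sqr_gt0 ?bound //; lra.
  by rewrite lte_fin gt_max invf_lt1 //; lra.
Qed.

Lemma legendre_expansion_of_expansion (q : nat) (kappa : R) :
  (2 < q)%N -> 0 < kappa ->
  (forall e : R, 0 < e -> exists2 delta : R, 0 < delta &
     forall t : R, 0 < t < delta ->
       `| f t - (t ^+ 2 / 2 - kappa * t ^+ q) | <= e * t ^+ q) ->
  (forall e : R, 0 < e -> exists2 delta : R, 0 < delta &
     forall s : R, 0 < s < delta ->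
       (`| legendre s - (s ^+ 2 / 2 + kappa * s ^+ q)%:E | <= (e * s ^+ q)%:E)%E).
Proof.
move=> q2 k0 fexp e e0; have e2 : 0 < e / 2 by lra.
have [d1 d10 fd1] := fexp _ e2.
pose K := kappa + e / 2; have K0 : 0 < K by rewrite /K; lra.
have [rho rho0 gap] := expr_le_sqr_gap q2 K0 e2.
have K4 : 0 < (4 * K)^-1 by rewrite invr_gt0; lra.
have [rP rP0 small] := expr_le_sqr_near0 q2 K4.
have f_lo t : 0 < t < d1 -> t ^+ 2 / 2 - K * t ^+ q <= f t.
  by move=> /fd1; rewrite ler_norml /K => /andP[+ _]; lra.
have f_hi t : 0 < t < d1 -> f t <= t ^+ 2 / 2 - (kappa - e / 2) * t ^+ q.
  by move=> /fd1; rewrite ler_norml => /andP[_]; lra.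
pose m := Num.min d1 (Num.min rho rP); pose t1 := m / 2.
have [t10 t1d1 t1rho t1rP] : [/\ 0 < t1, t1 < d1, t1 < rho & t1 < rP].
  have : 0 < m by rewrite !lt_min d10 rho0 rP0.
  have : m <= d1 by rewrite ge_min lexx.
  have : m <= rho by rewrite !ge_min lexx orbT.
  have : m <= rP by rewrite !ge_min lexx !orbT.
  by rewrite /t1; split; lra.
have ft10 : 0 < f t1.
  have := f_lo t1; rewrite t10 t1d1 => /(_ isT).
  have := small t1; rewrite (ltW t10) t1rP => /(_ isT) /(ler_wpM2l (ltW K0)).
  have -> : K * ((4 * K)^-1 * t1 ^+ 2) = t1 ^+ 2 / 4 by field; rewrite gt_eqF.
  have : 0 < t1 ^+ 2 by exact: exprn_gt0.
  lra.
exists (Num.min (Num.min d1 rho) (f t1 / t1)).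
  by rewrite !lt_min d10 rho0 divr_gt0.
move=> s /andP[s0]; rewrite !lt_min ltr_pdivlMr // => /andP[/andP[sd1 srho] st1].
have sq0 : 0 <= s ^+ q by apply: exprn_ge0; lra.
apply/lee_abse_subEFin; split.
  apply: le_trans (legendre_ge s (ltW s0)); rewrite lee_fin -expr2.
  have := mulr_ge0 (ltW e0) sq0.
  by have := f_hi s; rewrite s0 sd1 => /(_ isT); nra.
apply: legendre_le_local t10 _ _; first exact: ltW.
move=> t /andP[t0 tt1].
have [->|tpos] := eqVneq t 0.
  rewrite mulr0 f0 subr0; have : 0 <= kappa * s ^+ q by rewrite mulr_ge0 //; lra.
  by have := sqr_ge0 s; nra.
have {tpos}t0 : 0 < t by rewrite lt0r tpos.
have := f_lo t; rewrite t0 (le_lt_trans tt1 t1d1) => /(_ isT).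
have := gap s t; rewrite s0 srho (ltW t0) (le_lt_trans tt1 t1rho) => /(_ isT isT).
have -> : s * t = s ^+ 2 / 2 + t ^+ 2 / 2 - (t - s) ^+ 2 / 2 by field.
rewrite /K; lra.
Qed.

Lemma expansion_of_legendre_expansion (q : nat) (kappa : R) :
  (2 < q)%N -> 0 < kappa ->
  (forall e : R, 0 < e -> exists2 delta : R, 0 < delta &
     forall s : R, 0 < s < delta ->
       (`| legendre s - (s ^+ 2 / 2 + kappa * s ^+ q)%:E | <= (e * s ^+ q)%:E)%E) ->
  (forall e : R, 0 < e -> exists2 delta : R, 0 < delta &
     forall t : R, 0 < t < delta ->
       `| f t - (t ^+ 2 / 2 - kappa * t ^+ q) | <= e * t ^+ q).
Proof.
move=> q2 k0 Iexp e e0.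
pose e1 := Num.min e (kappa / 2).
have e10 : 0 < e1 by rewrite lt_min e0 /=; lra.
have e1e : e1 <= e by rewrite ge_min lexx.
have e1k : e1 <= kappa / 2 by rewrite ge_min lexx orbT.
have e12 : 0 < e1 / 2 by lra.
have [dI dI0 Id] := Iexp _ e12.
have I_lo s : 0 < s < dI ->
    ((s ^+ 2 / 2 + kappa * s ^+ q - e1 / 2 * s ^+ q)%:E <= legendre s)%E.
  by move=> /Id /lee_abse_subEFin [].
have I_hi s : 0 < s < dI ->
    (legendre s <= (s ^+ 2 / 2 + kappa * s ^+ q + e1 / 2 * s ^+ q)%:E)%E.
  by move=> /Id /lee_abse_subEFin [].
have f_lo t : 0 < t < dI -> t ^+ 2 / 2 - kappa * t ^+ q - e1 / 2 * t ^+ q <= f t.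
  move=> tdI; have /andP[t0 _] := tdI.
  have := le_trans (legendre_ge t (ltW t0)) (I_hi t tdI).
  by rewrite lee_fin -expr2; lra.
have K0 : 0 < kappa - e1 by lra.
have [rho rho0 gap] := expr_le_sqr_gap q2 K0 e12.
have k8 : 0 < (8 * kappa)^-1 by rewrite invr_gt0; lra.
have [rP rP0 small] := expr_le_sqr_near0 q2 k8.
pose sigma := Num.min dI rho / 2.
have [sigma0 sigmadI sigmarho] : [/\ 0 < sigma, sigma < dI & sigma < rho].
  have : 0 < Num.min dI rho by rewrite lt_min dI0 rho0.
  have : Num.min dI rho <= dI by rewrite ge_min lexx.
  have : Num.min dI rho <= rho by rewrite ge_min lexx orbT.
  by rewrite /sigma; split; lra.
have m0 : 0 < sigma ^+ 2 / 2 by rewrite divr_gt0 ?exprn_gt0.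
have Isigma : ((sigma ^+ 2 / 2)%:E <= legendre sigma)%E.
  apply: le_trans (I_lo sigma _); last by rewrite sigma0.
  rewrite lee_fin; have : 0 <= sigma ^+ q by rewrite exprn_ge0 // ltW.
  nra.
have [tau tau0 sub_lt] := subgradient_lt m0 Isigma.
exists (Num.min (Num.min dI rho) (Num.min rP tau)).
  by rewrite !lt_min dI0 rho0 rP0 tau0.
move=> t /andP[t0]; rewrite !lt_min => /andP[/andP[tdI trho] /andP[trP ttau]].
have tq0 : 0 <= t ^+ q by rewrite exprn_ge0 // ltW.
have flo := f_lo t; rewrite t0 tdI in flo; have {}flo := flo isT.
have ft : t ^+ 2 / 4 <= f t.
  have := small t; rewrite (ltW t0) trP => /(_ isT) /(ler_wpM2l (ltW k0)).
  have -> : kappa * ((8 * kappa)^-1 * t ^+ 2) = t ^+ 2 / 8 by field; rewrite gt_eqF.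
  have : e1 / 2 * t ^+ q <= kappa * t ^+ q by rewrite ler_wpM2r //; lra.
  lra.
have ft0 : 0 < f t by apply: lt_le_trans ft; rewrite divr_gt0 ?exprn_gt0.
have [s st] := convex_subgradient t0.
have ssigma : s < sigma by apply: sub_lt st; rewrite ?t0 ?ttau // ltW.
have s0 : 0 < s.
  have := st 0 (lexx 0); rewrite f0 => st0.
  by rewrite -(pmulr_lgt0 _ t0); lra.
have := I_lo s; rewrite s0 (lt_trans ssigma sigmadI) => /(_ isT).
rewrite (legendre_subgradient (ltW t0) st) lee_fin => Is.
have := gap s t; rewrite s0 (lt_trans ssigma sigmarho) (ltW t0) trho => /(_ isT isT).
have : s * t = s ^+ 2 / 2 + t ^+ 2 / 2 - (t - s) ^+ 2 / 2 by field.
have : e1 * t ^+ q <= e * t ^+ q by rewrite ler_wpM2r.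
rewrite ler_norml; lra.
Qed.

End legendre.

Lemma expR_convex_scaled (R : realType) (A B l y z : R) :
  0 < A -> 0 < B -> 0 <= l <= 1 ->
  expR (l * y + (1 - l) * z) <=
  expR (l * ln A + (1 - l) * ln B) * (l / A * expR y + (1 - l) / B * expR z).
Proof.
move=> A0 B0 /andP[l0 l1].
have cvx := convex_expR (Itv01 l0 l1) (y - ln A) (z - ln B); rewrite /= convRE in cvx.
have -> : l * y + (1 - l) * z =
    l * (y - ln A) + (1 - l) * (z - ln B) + (l * ln A + (1 - l) * ln B) by ring.
rewrite expRD mulrC ler_wpM2l ?expR_ge0 //; apply: le_trans cvx _.
rewrite !expRD !expRN !lnK ?posrE // convRE /= le_eqVlt; apply/orP; left; apply/eqP.
by rewrite /unstable.onem; field; rewrite !gt_eqF.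
Qed.

Section cumulant.
Context d (T : measurableType d) (R : realType) (P : probability T R)
  (X : {RV P >-> R}).
Implicit Types a b c l : R.

Lemma mgfE c : 'M_P X c = (\int[P]_x (expR (c * X x))%:E)%E.
Proof. by rewrite /mmt_gen_fun unlock; apply: eq_integral => x _ /=; rewrite mulrC. Qed.

Lemma measurable_expRM c : measurable_fun [set: T] (fun x => (expR (c * X x))%:E).
Proof.
apply/measurable_EFinP; apply: measurableT_comp; first exact: measurable_expR.
exact: measurable_funM.
Qed.

Lemma mgf_neq0 c : 'M_P X c != 0%E.
Proof.
apply/eqP; rewrite mgfE => M0.
have : (\int[P]_(x in setT) `|(expR (c * X x))%:E| = 0)%E.
  by rewrite -M0; apply: eq_integral => x _; rewrite abse_EFin ger0_norm ?expR_ge0.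
move/(ae_eq_integral_abs P measurableT (measurable_expRM c)) => [N [mN PN0 sub]].
have TN : [set: T] `<=` N.
  by move=> x _; apply: sub => /(_ I) [] /eqP; rewrite gt_eqF ?expR_gt0.
have : (P [set: T] <= 0)%E by rewrite -PN0 le_measure ?inE.
by rewrite probability_setT lee_fin ler10.
Qed.

Lemma mgf_fin_gt0 c : ('M_P X c < +oo)%E -> exists2 A : R, 0 < A & 'M_P X c = A%:E.
Proof.
have : (0 <= 'M_P X c)%E by rewrite mgfE integral_ge0 // => x _; rewrite lee_fin expR_ge0.
move: (mgf_neq0 c); case: ('M_P X c) => [r| |] //= r0; rewrite lee_fin => r_ge0 _.
by exists r => //; rewrite lt_def r_ge0 andbT; apply: contra r0 => /eqP ->.
Qed.

Lemma cgf0 : cgf P X 0 = 0.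
Proof.
rewrite /cgf /mmt_gen_fun.
have -> : expR \o 0 \o* X = cst 1 by apply/funext => x /=; rewrite mulr0 expR0.
by rewrite expectation_cst /= ln1.
Qed.

Lemma mgf_le_combination m a b k1 k2 : 0 <= k1 -> 0 <= k2 ->
  (forall x, expR (m * X x) <= k1 * expR (a * X x) + k2 * expR (b * X x)) ->
  ('M_P X m <= k1%:E * 'M_P X a + k2%:E * 'M_P X b)%E.
Proof.
move=> k10 k20 pointwise.
have mE := measurable_expRM.
have mkE k c : measurable_fun [set: T] (fun x => k%:E * (expR (c * X x))%:E)%E.
  exact: emeasurable_funM.
have E0 c x : [set: T] x -> (0 <= (expR (c * X x))%:E)%E.
  by rewrite lee_fin expR_ge0.
have kE0 k c x : 0 <= k -> [set: T] x -> (0 <= k%:E * (expR (c * X x))%:E)%E.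
  by move=> k0 _; rewrite mule_ge0 ?E0.
rewrite !mgfE -!ge0_integralZl_EFin ?E0 // -ge0_integralD //;
  [|by move=> x; apply: kE0 ..].
apply: ge0_le_integral => //; first exact: emeasurable_funD.
by move=> x _; rewrite -!EFinM -EFinD lee_fin pointwise.
Qed.

(* Hoelder's inequality for [l] and [1 - l], obtained by integrating the
   pointwise [expR_convex_scaled]. *)
Lemma cgf_convex : (forall t, 0 <= t -> ('M_P X t < +oo)%E) ->
  forall a b l, 0 <= a -> 0 <= b -> 0 <= l <= 1 ->
  cgf P X (l * a + (1 - l) * b) <= l * cgf P X a + (1 - l) * cgf P X b.
Proof.
move=> Mfin a b l a0 b0 l01; have /andP[l0 l1] := l01.
have [A A0 MA] := mgf_fin_gt0 (Mfin _ a0).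
have [B B0 MB] := mgf_fin_gt0 (Mfin _ b0).
have m0 : 0 <= l * a + (1 - l) * b by rewrite addr_ge0 ?mulr_ge0 //; lra.
have [M M0 MM] := mgf_fin_gt0 (Mfin _ m0).
pose C := expR (l * ln A + (1 - l) * ln B).
have C0 : 0 < C by exact: expR_gt0.
have := @mgf_le_combination (l * a + (1 - l) * b) a b (C * l / A) (C * (1 - l) / B).
rewrite MA MB MM -!EFinM -EFinD lee_fin.
have -> : C * l / A * A + C * (1 - l) / B * B = C by field; rewrite !gt_eqF.
move=> MC; rewrite /cgf MA MB MM /= -[_ + _]expRK ler_ln ?posrE //.
apply: MC; rewrite ?divr_ge0 ?mulr_ge0 ?(ltW A0) ?(ltW B0) ?(ltW C0) //; try lra.
move=> x; have -> : (l * a + (1 - l) * b) * X x = l * (a * X x) + (1 - l) * (b * X x).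
  by ring.
by apply: le_trans (expR_convex_scaled _ _ A0 B0 l01) _; rewrite mulrDr !mulrA.
Qed.

End cumulant.

Theorem proposition4p1 (d : measure_display) (T : measurableType d)
  (R : realType) (P : probability T R) (X : {RV P >-> R}) (sigma0 : R) :
  ('E_P[X] = 0)%E ->
  ('V_P[X] = 1)%E ->
  0 < sigma0 ->
  (forall t : R, - sigma0 <= t -> ('M_P X t < +oo)%E) ->
  (* (i) *)
  ((forall eps : R, 0 < eps ->
      (ereal_sup [set (cgf P X t / (t ^+ 2 / 2))%:E
                  | t in `[eps, +oo[%classic] < 1)%E)
   <->
   (forall eps : R, 0 < eps ->
      (1 < ereal_inf [set (rate P X s * (s ^+ 2 / 2)^-1%:E)%E
                      | s in `[eps, +oo[%classic])%E))
  /\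
  (* (ii) *)
  (forall (q : nat) (kappa : R), (3 <= q)%N -> 0 < kappa ->
     (forall e : R, 0 < e -> exists2 delta : R, 0 < delta &
        forall t : R, 0 < t < delta ->
          `| cgf P X t - (t ^+ 2 / 2 - kappa * t ^+ q) | <= e * t ^+ q)
     <->
     (forall e : R, 0 < e -> exists2 delta : R, 0 < delta &
        forall s : R, 0 < s < delta ->
          (`| rate P X s - (s ^+ 2 / 2 + kappa * s ^+ q)%:E | <=
             (e * s ^+ q)%:E)%E)).
Proof.
move=> _ _ sigma0_gt0 Mfin.
have Mfin_nonneg t : 0 <= t -> ('M_P X t < +oo)%E.
  by move=> t0; apply: Mfin; apply: le_trans t0; rewrite oppr_le0 ltW.
have f0 := cgf0 X.
have f_convex := cgf_convex Mfin_nonneg.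
split; first exact: sub_quadratic_iff_legendre_super_quadratic f0 f_convex.
move=> q kappa q3 kappa0; split.
- exact: legendre_expansion_of_expansion.
- exact: expansion_of_legendre_expansion.
Qed.
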